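(* Let $0<p<1-1/e^2$ be constant, $b=\frac1{1-p}$, and $\gamma(n)=2\log_b n-2\log_b\log_b n-2\log_b 2$. Let $k=k(n)$ be positive integers with $\frac nk-\gamma(n)=O(1)$. Then, as $n\to\infty$, \[\frac{\mu_{n,k+1}}{\mu_{n,k}}\ge(1+o(1))\, b^{\frac{n^2}{2k(k+1)}-\frac{n}{2k}}.\]
   Context: For $n\in\mathbb{N}$ let $m(n)=\lfloor p\binom n2\rfloor$ and $G\sim\mathcal{G}(n,m(n))$, the uniform random graph on $n$ labelled vertices with exactly $m(n)$ edges. An ordered $k$-equipartition of $[n]$ is an ordered partition into $k$ parts each of size $\lceil n/k\rceil$ or $\lfloor n/k\rfloor$, the larger parts listed first. Let $X_{n,k}$ be the number of ordered $k$-equipartitions all of whose parts are independent in $G$, and $\mu_{n,k}=\mathbb{E}[X_{n,k}]$. *)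

From HB Require Import structures.
From mathcomp Require Import all_boot all_order all_algebra.
From mathcomp Require Import reals.
From mathcomp Require Import sequences exp.
Set Implicit Arguments. Unset Strict Implicit. Unset Printing Implicit Defensive.
Import Order.TTheory GRing.Theory Num.Theory.
Local Open Scope ring_scope.

Definition is_graph (n : nat) (E : {set {set 'I_n}}) : bool :=
  [forall e in E, #|e| == 2%N].

(* All graphs on [n] with exactly m edges: the support of G(n,m). *)
Definition graphs_nm (n m : nat) : {set {set {set 'I_n}}} :=
  [set E : {set {set 'I_n}} | is_graph E && (#|E| == m)].

(* m(n) = floor(p * C(n,2)) (p * C(n,2) >= 0, so truncation = floor) *)
Definition m_of (R : realType) (p : R) (n : nat) : nat :=
  Num.truncn (p * ('C(n, 2))%:R).

(* An ordered k-equipartition of [n], encoded by the map f sending a vertex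
   to the index of its part: part j (0-based) has size n %/ k + [j < n %% k],
   i.e. the ceil(n/k)-sized parts come first. *)
Definition equipart (n k : nat) (f : {ffun 'I_n -> 'I_k}) : bool :=
  [forall j : 'I_k, #|[set x | f x == j]| == (n %/ k + (j < n %% k))%N].

Definition parts_indep (n k : nat) (E : {set {set 'I_n}}) (f : {ffun 'I_n -> 'I_k}) : bool :=
  [forall x : 'I_n, forall y : 'I_n, ([set x; y] \in E) ==> (f x != f y)].

Definition Xnk (n k : nat) (E : {set {set 'I_n}}) : nat :=
  #|[set f : {ffun 'I_n -> 'I_k} | equipart f && parts_indep E f]|.

(* mu_{n,k} = E[X_{n,k}] for G ~ G(n, m(n)) uniform *)
Definition mu (R : realType) (p : R) (n k : nat) : R :=
  (\sum_(E in graphs_nm n (m_of p n)) (Xnk k E)%:R) / (#|graphs_nm n (m_of p n)|)%:R.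

Definition bb (R : realType) (p : R) : R := (1 - p)^-1.
Definition logb (R : realType) (p : R) (x : R) : R := ln x / ln (bb p).

Definition gamma_n (R : realType) (p : R) (n : nat) : R :=
  2 * logb p n%:R - 2 * logb p (logb p n%:R) - 2 * logb p 2.

(* Let N = C(n,2) and m = m(n).  A graph with m edges makes a fixed ordered
   k-equipartition independent iff its edges avoid the F_k pairs lying inside a
   part, so mu_{n,k} = M_k C(N - F_k, m) / C(N, m), with M_k the multinomial
   number of equipartitions.  When n/k <= k, passing from k to k+1 parts does
   not decrease M (the product of the factorials of the part sizes drops) and
   frees F_k - F_{k+1} >= n^2/(2k(k+1)) - n/(2k) pairs.  Each freed pair
   multiplies the binomial by N/(N - m) >= b (1 - 1/((1-p)N)), and the
   accumulated factor (1 - 1/((1-p)N))^(F_k - F_{k+1}) is at least 1 - eps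
   because F_k <= (n/k) n/2 = O(n log n) = o(N).  The hypothesis
   n/k = gamma(n) + O(1) = O(log n) is used only for n <= k^2 and F_k = o(N). *)

From HB Require Import structures.
From mathcomp Require Import all_boot all_order all_algebra.
From mathcomp Require Import reals.
From mathcomp Require Import sequences exp.
From mathcomp Require Import zify ring lra.
Set Implicit Arguments. Unset Strict Implicit. Unset Printing Implicit Defensive.
Import Order.TTheory GRing.Theory Num.Theory.

Section Multinomial.
Variable k : nat.

Definition multinom n (s : 'I_k -> nat) : nat :=
  #|[set f : {ffun 'I_n -> 'I_k} | [forall j, #|[set x | f x == j]| == s j]]|.

Definition extend_ffun n (g : {ffun 'I_n -> 'I_k}) (j : 'I_k) : {ffun 'I_n.+1 -> 'I_k} :=
  [ffun x => if unlift ord_max x is Some y then g y else j].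

Lemma extend_ffun_lift n (g : {ffun 'I_n -> 'I_k}) j y :
  extend_ffun g j (lift ord_max y) = g y.
Proof. by rewrite ffunE liftK. Qed.

Lemma extend_ffun_max n (g : {ffun 'I_n -> 'I_k}) j : extend_ffun g j ord_max = j.
Proof. by rewrite ffunE unlift_none. Qed.

Lemma extend_ffun_inj n j : injective (extend_ffun (n := n) ^~ j).
Proof.
move=> g1 g2 /= eq_g; apply/ffunP => y.
by rewrite -(extend_ffun_lift g1 j) -(extend_ffun_lift g2 j) eq_g.
Qed.

Lemma card_set_ord_recr n (P : pred 'I_n.+1) :
  #|[set x | P x]| = (#|[set y : 'I_n | P (lift ord_max y)]| + P ord_max)%N.
Proof.
rewrite -!sum1_card big_mkcond [in RHS]big_mkcond big_ord_recr /=; congr (_ + _)%N.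
  apply: eq_bigr => y _; rewrite !inE.
  by have -> : widen_ord (leqnSn n) y = lift ord_max y by apply/val_inj/esym/lift_max.
by rewrite inE; case: (P _).
Qed.

Lemma card_fibre_extend n (g : {ffun 'I_n -> 'I_k}) j i :
  #|[set x | extend_ffun g j x == i]| = (#|[set y | g y == i]| + (j == i))%N.
Proof.
rewrite card_set_ord_recr extend_ffun_max; congr (_ + _)%N.
by apply: eq_card => y; rewrite !inE extend_ffun_lift.
Qed.

Definition decr_at (s : 'I_k -> nat) j i := (s i - (i == j))%N.

Lemma decr_at_neq s j i : i != j -> decr_at s j i = s i.
Proof. by rewrite /decr_at => /negbTE ->; rewrite subn0. Qed.

Lemma card_multinom_last n (s : 'I_k -> nat) j :
  #|[set f : {ffun 'I_n.+1 -> 'I_k} | [forall i, #|[set x | f x == i]| == s i] & f ord_max == j]| =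
  if (0 < s j)%N then multinom n (decr_at s j) else 0%N.
Proof.
case: posnP => [sj0 | sj_gt0].
  apply/eqP; rewrite cards_eq0; apply/eqP/setP => f; rewrite !inE.
  apply/negbTE/negP => /andP[/forallP/(_ j)/eqP fib_j fmax].
  move: fib_j; rewrite sj0 => /eqP; rewrite cards_eq0 => /eqP/setP/(_ ord_max).
  by rewrite !inE fmax.
rewrite /multinom -(card_imset _ (@extend_ffun_inj n j)); apply: eq_card => f.
rewrite !inE; apply/andP/imsetP => [[/forallP fib /eqP fmax] | [g]].
  set g := [ffun y => f (lift ord_max y)].
  have f_ext : f = extend_ffun g j.
    by apply/ffunP => x; rewrite !ffunE; case: unliftP => [y ->|->]; rewrite ?ffunE.
  exists g => //; rewrite inE; apply/forallP => i.
  move: (fib i); rewrite f_ext card_fibre_extend /decr_at => /eqP <-.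
  by rewrite [j == i]eq_sym addnK.
rewrite inE => /forallP fib ->; rewrite extend_ffun_max; split => //.
apply/forallP => i; rewrite card_fibre_extend (eqP (fib i)) /decr_at.
by case: (eqVneq i j) => [->|_]; rewrite ?subn1 ?addn1 ?prednK ?subn0 ?addn0.
Qed.

Lemma multinom_fact n (s : 'I_k -> nat) :
  (\sum_j s j)%N = n -> (multinom n s * \prod_j (s j)`!)%N = n`!.
Proof.
elim: n s => [|n IHn] s sum_s.
  have s0 j : s j = 0%N by apply/eqP; rewrite -leqn0 -sum_s (bigD1 j) //= leq_addr.
  rewrite big1 ?muln1 => [|j _]; last by rewrite s0.
  rewrite /multinom (_ : [set f : {ffun 'I_0 -> 'I_k} | _] = setT) ?cardsT ?card_ffun ?card_ord //.
  apply/setP => f; rewrite !inE; apply/forallP => j; rewrite s0 cards_eq0; apply/eqP/setP; by case.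
have -> : multinom n.+1 s = (\sum_j if (0 < s j)%N then multinom n (decr_at s j) else 0)%N.
  rewrite /multinom -sum1_card (partition_big (fun f : {ffun _ -> _} => f ord_max) xpredT) //=.
  apply: eq_bigr => j _; rewrite -card_multinom_last -sum1_card.
  by apply: eq_bigl => f; rewrite !inE.
rewrite big_distrl (eq_bigr (fun j => s j * n`!)%N) => [|j _].
  by rewrite -big_distrl /= sum_s factS.
case: posnP => [-> // | sj_gt0].
have sum_decr : (\sum_i decr_at s j i)%N = n.
  rewrite (bigD1 j) //= (eq_bigr s) => [|i /decr_at_neq //].
  by move: sum_s; rewrite (bigD1 j) //= /decr_at eqxx -(prednK sj_gt0) subn1 addSn => -[].
rewrite -(IHn _ sum_decr) (bigD1 j) //= [in RHS](bigD1 j) //=.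
rewrite [in RHS](eq_bigr (fun i => (s i)`!)) => [|i /decr_at_neq -> //].
by rewrite /decr_at eqxx -(prednK sj_gt0) subn1 factS /=; ring.
Qed.

End Multinomial.

Lemma card_set_andb (T : finType) (P Q : pred T) :
  #|[set x | P x && Q x]| = (\sum_(x | P x) Q x)%N.
Proof.
rewrite -sum1_card (eq_bigl (fun x => P x && Q x)) => [|x]; last by rewrite inE.
by rewrite big_mkcondr; apply: eq_bigr => x _; case: (Q x).
Qed.

Section GraphCounting.
Variables n k : nat.

Definition pairs : {set {set 'I_n}} := [set e : {set 'I_n} | #|e| == 2].

Definition monochromatic (f : {ffun 'I_n -> 'I_k}) (e : {set 'I_n}) : bool :=
  [forall x in e, forall y in e, f x == f y].

Definition bichromatic_pairs f := [set e in pairs | ~~ monochromatic f e].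

Lemma monochromatic2 f x y : monochromatic f [set x; y] = (f x == f y).
Proof.
apply/forall_inP/eqP => [mono | fxy u /set2P ux].
  exact/eqP/(forall_inP (mono x (set21 x y)) y (set22 x y)).
by apply/forall_inP => v /set2P vx; case: ux vx => -> [] ->; rewrite ?fxy.
Qed.

Lemma card_pairs : #|pairs| = 'C(n, 2).
Proof. by rewrite card_draws card_ord. Qed.

Lemma is_graphE E : is_graph E = (E \subset pairs).
Proof. by apply/forall_inP/subsetP => sub e /sub; rewrite inE. Qed.

Lemma card_graphs_nm m : #|graphs_nm n m| = 'C('C(n, 2), m).
Proof.
rewrite -card_pairs -cards_draws; apply: eq_card => E.
by rewrite !inE is_graphE.
Qed.

Lemma parts_indepE E f : is_graph E -> parts_indep E f = (E \subset bichromatic_pairs f).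
Proof.
move=> /forall_inP graphE; apply/forallP/subsetP => [indep e Ee | sub x].
  have e2 := graphE e Ee; have /cards2P [x [y [_ exy]]] := e2.
  rewrite !inE e2 exy monochromatic2 /=.
  by apply: (implyP (forallP (indep x) y)); rewrite -exy.
apply/forallP => y; apply/implyP => /sub.
by rewrite !inE monochromatic2 => /andP[].
Qed.

Lemma card_indep_graphs m f :
  #|[set E in graphs_nm n m | parts_indep E f]| = 'C(#|bichromatic_pairs f|, m).
Proof.
rewrite -cards_draws; apply: eq_card => E; rewrite !inE is_graphE.
case: (boolP (E \subset pairs)) => [sub | not_sub] /=.
  by rewrite parts_indepE ?is_graphE // andbC.
apply/esym/negbTE; apply: contra not_sub => /andP[/subset_trans-> //].
by apply/subsetP => e; rewrite inE => /andP[].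
Qed.

Lemma card_bichromatic f :
  (#|bichromatic_pairs f| + \sum_j 'C(#|[set x | f x == j]|, 2))%N = 'C(n, 2).
Proof.
have mono_sum e : e \in pairs ->
    (\sum_j (e \subset [set x | f x == j]))%N = monochromatic f e.
  rewrite inE => /cards2P [x [y [_ ->]]]; rewrite monochromatic2 (bigD1 (f x)) //=.
  rewrite big1 => [|j /negbTE fxj]; last by rewrite subUset !sub1set !inE eq_sym fxj.
  by rewrite subUset !sub1set !inE eqxx addn0 eq_sym.
have card_pairs_in j : 'C(#|[set x | f x == j]|, 2) =
    (\sum_(e | e \in pairs) (e \subset [set x | f x == j]))%N.
  by rewrite -cards_draws -card_set_andb; apply: eq_card => e; rewrite !inE andbC.
rewrite (eq_bigr _ (fun j _ => card_pairs_in j)) exchange_big /=.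
rewrite (eq_bigr _ mono_sum) -card_set_andb -card_pairs.
rewrite -(cardsID [set e | monochromatic f e] pairs) addnC.
by congr (_ + _)%N; apply: eq_card => e; rewrite !inE // andbC.
Qed.

Lemma sum_Xnk m :
  (\sum_(E in graphs_nm n m) Xnk k E)%N =
  (\sum_(f | equipart f) 'C(#|bichromatic_pairs f|, m))%N.
Proof.
rewrite (eq_bigr _ (fun E _ => card_set_andb _ _)) exchange_big /=.
by apply: eq_bigr => f _; rewrite -card_indep_graphs card_set_andb.
Qed.

End GraphCounting.

Lemma big_ord_ltn (R : Type) (idx : R) (op : Monoid.law idx) (F : bool -> R) k r :
  (r <= k)%N ->
  \big[op/idx]_(j < k) F (j < r) =
  op (\big[op/idx]_(j < r) F true) (\big[op/idx]_(j < k - r) F false).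
Proof.
move=> le_rk; have [d ->] : exists d, k = (r + d)%N by exists (k - r)%N; rewrite subnKC.
rewrite addKn big_split_ord /=.
by congr (op _ _); apply: eq_bigr => j _; rewrite ?ltn_ord // ltnNge leq_addr.
Qed.

Section EquipartitionSizes.
Variables n k : nat.
Hypothesis k_gt0 : (0 < k)%N.

Definition part_size (j : 'I_k) : nat := (n %/ k + (j < n %% k))%N.

Definition mono_pairs : nat := (\sum_j 'C(part_size j, 2))%N.

Definition fact_parts : nat := (\prod_j (part_size j)`!)%N.

Let le_mod : (n %% k <= k)%N. Proof. exact/ltnW/ltn_pmod. Qed.

Lemma sum_part_size : (\sum_j part_size j)%N = n.
Proof.
rewrite (big_ord_ltn addn (fun b => n %/ k + b)%N le_mod) /= !sum_nat_const !card_ord addn1 addn0.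
by rewrite [RHS](divn_eq n k) mulnSr addnAC -mulnDl subnKC // mulnC.
Qed.
Lemma fact_partsE : fact_parts = ((n %/ k).+1`! ^ (n %% k) * (n %/ k)`! ^ (k - n %% k))%N.
Proof.
rewrite /fact_parts (big_ord_ltn muln (fun b => (n %/ k + b)`!)%N le_mod) /=.
by rewrite !prod_nat_const !card_ord addn1 addn0.
Qed.

Lemma mono_pairsE :
  mono_pairs = (n %% k * 'C((n %/ k).+1, 2) + (k - n %% k) * 'C(n %/ k, 2))%N.
Proof.
rewrite /mono_pairs (big_ord_ltn addn (fun b => 'C(n %/ k + b, 2))%N le_mod) /=.
by rewrite !sum_nat_const !card_ord addn1 addn0.
Qed.

Lemma multinom_part_size : (multinom n part_size * fact_parts)%N = n`!.
Proof. exact/multinom_fact/sum_part_size. Qed.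

End EquipartitionSizes.

Arguments part_size : clear implicits.

Lemma bin2R (R : pzRingType) q : ('C(q, 2)%:R * 2 = q%:R * (q%:R - 1) :> R)%R.
Proof.
rewrite -natrM (_ : 2%N = 2`!) // bin_ffact ffactnS ffactn1.
by case: q => [|q]; rewrite ?mul0r // natrM -natr1 addrK.
Qed.

Lemma mono_pairsR (R : comPzRingType) n k : (0 < k)%N ->
  ((mono_pairs n k * k * 2)%:R =
   n%:R * (n%:R - k%:R) + (n %% k)%:R * (k%:R - (n %% k)%:R) :> R)%R.
Proof.
move=> k_gt0; set q := (n %/ k)%N; set r := (n %% k)%N.
have -> : (mono_pairs n k * k * 2 =
    r * ('C(q.+1, 2) * 2) * k + (k - r) * ('C(q, 2) * 2) * k)%N.
  by rewrite mono_pairsE //; ring.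
rewrite natrD !natrM !bin2R natrB ?(ltnW (ltn_pmod n k_gt0)) //.
by rewrite [n in RHS](divn_eq n k) natrD natrM -natr1; ring.
Qed.

Lemma leq_expn2r m n e : (m <= n)%N -> (m ^ e <= n ^ e)%N.
Proof. by case: e => // e; rewrite leq_exp2r. Qed.

Lemma fact_leq_exp q : (q`! <= q.+1 ^ q)%N.
Proof.
elim: q => // q IHq; rewrite factS expnS leq_mul //.
exact: leq_trans IHq (leq_expn2r _ _).
Qed.

Lemma fact_exp_succ_le q : (q`! ^ q.+1 <= q.+1`! ^ q)%N.
Proof. by rewrite factS expnMn expnS leq_mul ?fact_leq_exp. Qed.

Lemma mono_pairs_eq0 n k : (0 < k)%N -> (n <= k)%N -> mono_pairs n k = 0%N.
Proof.
move=> k_gt0; rewrite mono_pairsE //; case: ltngtP => // [lt_nk | ->] _.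
  by rewrite divn_small // modn_small // !bin_small ?muln0.
by rewrite divnn modnn k_gt0 mul0n add0n muln0.
Qed.

Section SuccessiveEquipartitions.
Variables n k : nat.
Hypothesis k_gt0 : (0 < k)%N.

Let lt_mod : (n %% k < k)%N. Proof. exact: ltn_pmod. Qed.

Lemma edivn_succ_le : (n %/ k <= n %% k)%N ->
  n %/ k.+1 = n %/ k /\ n %% k.+1 = (n %% k - n %/ k)%N.
Proof.
rewrite [in n %/ k.+1](divn_eq n k) [in n %% k.+1](divn_eq n k).
move: (n %/ k) (n %% k) lt_mod => q r lt_rk le_qr.
have lt_r'k : (r - q < k.+1)%N by lia.
rewrite (_ : q * k + r = q * k.+1 + (r - q))%N; last by nia.
by rewrite divnMDl // divn_small // addn0 modnMDl modn_small.
Qed.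

Lemma edivn_succ_gt : (n %% k < n %/ k <= k)%N ->
  n %/ k.+1 = (n %/ k).-1 /\ n %% k.+1 = (n %% k + k.+1 - n %/ k)%N.
Proof.
rewrite [in n %/ k.+1](divn_eq n k) [in n %% k.+1](divn_eq n k).
move: (n %/ k) (n %% k) => [|q] r // /andP[lt_rq le_qk].
have lt_r'k : (r + k.+1 - q.+1 < k.+1)%N by lia.
rewrite (_ : q.+1 * k + r = q * k.+1 + (r + k.+1 - q.+1))%N; last by nia.
by rewrite divnMDl // divn_small // addn0 modnMDl modn_small.
Qed.

Hypothesis le_div : (n %/ k <= k)%N.

Lemma modn_succ_bound :
  (k * (n %% k.+1) * (k.+1 - n %% k.+1) <= k.+1 * (n + n %% k * (k - n %% k)))%N.
Proof.
have n_eq := divn_eq n k.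
case: (leqP (n %/ k) (n %% k)) => [le_qr | lt_rq].
  have [_ ->] := edivn_succ_le le_qr.
  move: (n %/ k) (n %% k) n_eq le_qr lt_mod => q r -> le_qr lt_rk.
  have [t [w [-> ->]]] : exists t w, r = (q + t)%N /\ k = (q + t + w).+1.
    by exists (r - q)%N, (k - r - 1)%N; lia.
  have -> : (q + t - q = t)%N by lia.
  have -> : ((q + t + w).+2 - t = (q + w).+2)%N by lia.
  have -> : ((q + t + w).+1 - (q + t) = w.+1)%N by lia.
  nia.
have [_ ->] := edivn_succ_gt (introT andP (conj lt_rq le_div)).
move: (n %/ k) (n %% k) n_eq lt_rq le_div => q r -> lt_rq le_qk.
have [t [w [-> ->]]] : exists t w, q = (r + t).+1 /\ k = (r + t + w).+1.
  by exists (q - r - 1)%N, (k - q)%N; lia.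
have -> : (r + (r + t + w).+2 - (r + t).+1 = r + w + 1)%N by lia.
have -> : ((r + t + w).+2 - (r + w + 1) = t + 1)%N by lia.
have -> : ((r + t + w).+1 - r = (t + w).+1)%N by lia.
nia.
Qed.

Lemma fact_parts_succ_le : (fact_parts n k.+1 <= fact_parts n k)%N.
Proof.
(* With [q = n %/ k], [r = n %% k]: after cancelling common factors, the case
   [q <= r] is [q!^(q+1) <= (q+1)!^q], and the case [r < q = s + 1] is
   [s! <= (s+2)^r (s+1)^(s-r)]. *)
rewrite !fact_partsE //.
case: (leqP (n %/ k) (n %% k)) => [le_qr | lt_rq].
  have [-> ->] := edivn_succ_le le_qr.
  move: (n %/ k) (n %% k) le_qr lt_mod => q r le_qr lt_rk.
  have [t [w [-> ->]]] : exists t w, r = (q + t)%N /\ k = (q + t + w).+1.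
    by exists (r - q)%N, (k - r - 1)%N; lia.
  have -> : (q + t - q = t)%N by lia.
  have -> : ((q + t + w).+2 - t = w.+1 + q.+1)%N by lia.
  have -> : ((q + t + w).+1 - (q + t) = w.+1)%N by lia.
  rewrite [(q + t)%N]addnC !expnD -!mulnA leq_mul2l [X in (_ <= X)%N]mulnC.
  by rewrite leq_mul2l fact_exp_succ_le !orbT.
have [-> ->] := edivn_succ_gt (introT andP (conj lt_rq le_div)).
move: (n %/ k) (n %% k) lt_rq le_div => q r lt_rq le_qk.
have [s [t [w [-> -> ->]]]] :
    exists s t w, [/\ q = s.+1, s = (r + t)%N & k = (r + t + w).+1].
  by exists (q - 1)%N, (q - 1 - r)%N, (k - q)%N; split; lia.
set A := (r + t).+1`!; set B := (r + t)`!.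
have -> : (r + (r + t + w).+2 - (r + t).+1 = r + w.+1)%N by lia.
have -> : ((r + t + w).+2 - (r + w.+1) = t.+1)%N by lia.
have -> : ((r + t + w).+1 - r = t + w.+1)%N by lia.
rewrite factS -/A expnMn.
have -> : ((r + t).+2 ^ r * A ^ r * A ^ (t + w.+1) =
    A ^ (r + w.+1) * ((r + t).+2 ^ r * A ^ t))%N by rewrite !expnD; ring.
rewrite leq_mul2l; apply/orP; right.
rewrite /A factS -/B expnMn expnSr mulnA [X in (_ <= X)%N]mulnC leq_mul2l.
apply/orP; right; apply: leq_trans (fact_leq_exp _) _; rewrite expnD leq_mul2r.
by rewrite leq_expn2r ?orbT.
Qed.

Lemma multinom_part_size_succ :
  (multinom n (part_size n k) <= multinom n (part_size n k.+1))%N.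
Proof.
have fact_parts_gt0 : (0 < fact_parts n k.+1)%N.
  by rewrite prodn_gt0 // => j; rewrite fact_gt0.
rewrite -(leq_pmul2r fact_parts_gt0) multinom_part_size //.
by rewrite -(multinom_part_size n k_gt0) leq_mul2l fact_parts_succ_le orbT.
Qed.

Local Open Scope ring_scope.

Lemma mono_pairs_gap (R : realDomainType) :
  n%:R * (n%:R - k.+1%:R) + (mono_pairs n k.+1 * (2 * k * k.+1))%N%:R
    <= (mono_pairs n k * (2 * k * k.+1))%N%:R :> R.
Proof.
have bound := modn_succ_bound.
rewrite -(ler_nat R) !natrM natrD natrM !natrB ?(ltnW (ltn_pmod _ _)) // in bound.
(* By [mono_pairsR], the difference of the two sides is
   [(k + 1) (n + r (k - r)) - k r' (k + 1 - r')], with [r], [r'] the remainders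
   of [n] modulo [k] and [k + 1]. *)
have -> : (mono_pairs n k * (2 * k * k.+1))%N%:R =
    k.+1%:R * (mono_pairs n k * k * 2)%N%:R :> R by rewrite !natrM; ring.
have -> : (mono_pairs n k.+1 * (2 * k * k.+1))%N%:R =
    k%:R * (mono_pairs n k.+1 * k.+1 * 2)%N%:R :> R by rewrite !natrM; ring.
rewrite !mono_pairsR // -natr1 in bound *; lra.
Qed.

Lemma mono_pairs_succ_le : (mono_pairs n k.+1 <= mono_pairs n k)%N.
Proof.
case: (leqP n k) => [le_nk | lt_kn]; first by rewrite !mono_pairs_eq0 ?leqW.
have c_gt0 : (0 < 2 * k * k.+1)%N by rewrite !muln_gt0 k_gt0.
rewrite -(leq_pmul2r c_gt0) -(ler_nat int); apply: le_trans (mono_pairs_gap int).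
by rewrite lerDr mulr_ge0 // subr_ge0 ler_nat.
Qed.

End SuccessiveEquipartitions.

Lemma mono_pairs_le n k : (0 < k)%N -> (mono_pairs n k * 2 <= n %/ k * n)%N.
Proof.
move=> k_gt0; rewrite /mono_pairs big_distrl /=.
rewrite -[X in (_ <= _ * X)%N](sum_part_size n k_gt0) big_distrr /=.
apply: leq_sum => j _; rewrite (_ : 2%N = 2`!) // bin_ffact ffactnS ffactn1 mulnC leq_mul2r.
by rewrite /part_size; case: (j < _); rewrite /= ?addn1 ?addn0 ?leq_pred ?leqnn orbT.
Qed.

Local Open Scope ring_scope.

Lemma muE (R : realType) (p : R) n k :
  mu p n k = (multinom n (part_size n k) *
              'C('C(n, 2) - mono_pairs n k, m_of p n))%:R / 'C('C(n, 2), m_of p n)%:R.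
Proof.
rewrite /mu card_graphs_nm -natr_sum sum_Xnk; congr (_%:R / _).
rewrite (eq_bigr (fun _ => 'C('C(n, 2) - mono_pairs n k, m_of p n))) => [|f /forallP fib].
  rewrite (eq_bigl (fun f => f \in [set f | equipart f])) => [|f]; last by rewrite inE.
  by rewrite sum_nat_const; congr (_ * _)%N; apply: eq_card => f; rewrite !inE.
have -> : mono_pairs n k = (\sum_j 'C(#|[set x | f x == j]|, 2))%N.
  by apply: eq_bigr => j _; rewrite (eqP (fib j)).
by rewrite -(card_bichromatic f) addnK.
Qed.

Lemma exponent_le_mono_pairs_drop (R : realFieldType) n k :
  (0 < k)%N -> (n %/ k <= k)%N ->
  n%:R ^+ 2 / (2 * k%:R * k.+1%:R) - n%:R / (2 * k%:R)
    <= (mono_pairs n k - mono_pairs n k.+1)%:R :> R.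
Proof.
move=> k_gt0 le_div; have gap := mono_pairs_gap k_gt0 le_div R.
rewrite !natrM in gap; rewrite natrB ?mono_pairs_succ_le //.
have k_gt0R : 0 < k%:R :> R by rewrite ltr0n.
have c_gt0 : 0 < 2 * k%:R * k.+1%:R :> R by rewrite !mulr_gt0 ?ltr0n.
have -> : n%:R ^+ 2 / (2 * k%:R * k.+1%:R) - n%:R / (2 * k%:R) =
    n%:R * (n%:R - k.+1%:R) / (2 * k%:R * k.+1%:R) :> R.
  by rewrite -natr1; field; rewrite -natr1 in c_gt0; apply/andP; split; lra.
by rewrite ler_pdivrMr //; lra.
Qed.

Lemma bin_pred_ratio N m Y : (Y <= N)%N -> (N * 'C(Y.-1, m) <= (N - m) * 'C(Y, m))%N.
Proof.
case: Y => [|Y] le_YN /=; first by case: m => [|m]; rewrite ?subn0 ?bin0n ?muln0.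
rewrite -(@leq_pmul2l Y.+1) // mulnCA mul_bin_down mulnA [X in (_ <= X)%N]mulnA.
by rewrite leq_mul2r; apply/orP; right; nia.
Qed.

Lemma bin_shift_ratio (R : numFieldType) N m X D : (X + D <= N)%N -> (m < N)%N ->
  (N%:R / (N - m)%:R) ^+ D * 'C(X, m)%:R <= 'C(X + D, m)%:R :> R.
Proof.
move=> le_XDN lt_mN; have Nm_gt0 : 0 < (N - m)%:R :> R by rewrite ltr0n subn_gt0.
elim: D le_XDN => [|D IHD] le_XDN; first by rewrite expr0 mul1r addn0.
have le_XD : (X + D <= N)%N by lia.
rewrite exprS -mulrA (le_trans (ler_wpM2l _ (IHD le_XD))) ?divr_ge0 //.
rewrite mulrAC ler_pdivrMr // [X in _ <= X]mulrC -!natrM ler_nat.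
by rewrite addnS in le_XDN *; exact: bin_pred_ratio.
Qed.

Lemma bernoulli_le (R : realDomainType) (t : R) D : t <= 1 -> 1 - D%:R * t <= (1 - t) ^+ D.
Proof.
move=> le_t1; elim: D => [|D IHD]; first by rewrite mul0r subr0.
rewrite exprS (le_trans _ (ler_wpM2l _ IHD)) ?subr_ge0 // -natr1.
by have := ler0n R D; nra.
Qed.

Section TruncatedDensity.
Variables (R : realType) (p : R) (N : nat).

Let truncn_pN_itv (p_ge0 : 0 <= p) := truncn_itv (mulr_ge0 p_ge0 (ler0n R N)).

Lemma truncn_lt : 0 <= p -> 1 <= (1 - p) * N%:R -> (Num.truncn (p * N%:R) < N)%N.
Proof.
move=> p_ge0 a_ge1; have /andP[+ _] := truncn_pN_itv p_ge0.
by move: (Num.truncn _) => m m_le; rewrite -(ltr_nat R); lra.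
Qed.

Lemma truncn_add_le F : 0 <= p -> F%:R <= (1 - p) * N%:R ->
  (Num.truncn (p * N%:R) + F <= N)%N.
Proof.
move=> p_ge0 le_F; have /andP[+ _] := truncn_pN_itv p_ge0.
by move: (Num.truncn _) => m m_le; rewrite -(ler_nat R) natrD; lra.
Qed.

Lemma truncn_ratio_ge : 0 <= p -> 1 <= (1 - p) * N%:R ->
  1 - ((1 - p) * N%:R)^-1 <= N%:R / (N - Num.truncn (p * N%:R))%:R * (1 - p).
Proof.
(* With [a = (1 - p) N] and [m] the truncation, [N - m <= a + 1]; hence the
   right-hand side [a / (N - m)] is at least [a / (a + 1) >= 1 - 1/a]. *)
move=> p_ge0 a_ge1; have := truncn_lt p_ge0 a_ge1.
have /andP[] := truncn_pN_itv p_ge0; move: (Num.truncn _) => m m_le m_gt lt_mN.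
have Nm_gt0 : 0 < (N - m)%:R :> R by rewrite ltr0n subn_gt0.
rewrite -natr1 in m_gt; rewrite natrB ?(ltnW lt_mN) // in Nm_gt0 *.
rewrite mulrAC ler_pdivlMr //.
have a_inv : (1 - p) * N%:R * ((1 - p) * N%:R)^-1 = 1 by rewrite mulfV // gt_eqF //; lra.
have ia_le1 : 0 <= 1 - ((1 - p) * N%:R)^-1 by rewrite subr_ge0 invf_le1 //; lra.
have ia_ge0 : 0 <= ((1 - p) * N%:R)^-1 by rewrite invr_ge0; lra.
have le_Nm : N%:R - m%:R <= (1 - p) * N%:R + 1 by lra.
apply: le_trans (ler_wpM2l ia_le1 le_Nm) _.
by rewrite mulrDr mulr1 mulrBl mul1r [_^-1 * _]mulrC a_inv; lra.
Qed.

End TruncatedDensity.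

Lemma bin_shift_ge (R : realType) (p eps : R) N F1 F2 :
  0 <= p < 1 -> eps <= 1 -> 1 <= (1 - p) * N%:R -> (F2 <= F1)%N ->
  F1%:R <= eps * ((1 - p) * N%:R) ->
  (1 - eps) * bb p ^+ (F1 - F2) * 'C(N - F1, Num.truncn (p * N%:R))%:R
    <= 'C(N - F2, Num.truncn (p * N%:R))%:R.
Proof.
(* Each of the [F1 - F2] extra admissible pairs multiplies the binomial by
   [c = N / (N - m) >= bb p (1 - 1/a)]; Bernoulli's inequality bounds the loss. *)
move=> /andP[p_ge0 p_lt1] eps_le1 a_ge1 le_F21 le_F1.
have le_F1N : (Num.truncn (p * N%:R) + F1 <= N)%N.
  by apply: truncn_add_le => //; apply: le_trans le_F1 _; rewrite ler_piMl //; lra.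
have lt_mN := truncn_lt p_ge0 a_ge1; have ratio := truncn_ratio_ge p_ge0 a_ge1.
move: (Num.truncn _) le_F1N lt_mN ratio => m le_F1N lt_mN ratio.
set a := (1 - p) * N%:R in a_ge1 le_F1 ratio; set c := N%:R / (N - m)%:R in ratio.
have a_gt0 : 0 < a by lra.
have ia_le1 : a^-1 <= 1 by rewrite invf_le1.
have bb_ge0 : 0 <= bb p by rewrite invr_ge0 subr_ge0 ltW.
have eps_bound : 1 - eps <= (1 - a^-1) ^+ (F1 - F2).
  apply: le_trans (bernoulli_le _ ia_le1); rewrite lerD2l lerN2 ler_pdivrMr //.
  by apply: le_trans le_F1; rewrite ler_nat leq_subr.
have ratio_bound : (1 - a^-1) * bb p <= c.
  rewrite (_ : c = c * (1 - p) * bb p); first exact: ler_wpM2r.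
  by rewrite /bb mulfK // subr_eq0 gt_eqF.
have -> : (N - F2 = N - F1 + (F1 - F2))%N by lia.
have le_XD : (N - F1 + (F1 - F2) <= N)%N by lia.
apply: le_trans (bin_shift_ratio R le_XD lt_mN).
apply: ler_wpM2r => //; apply: le_trans (ler_wpM2r (exprn_ge0 _ bb_ge0) eps_bound) _.
rewrite -exprMn lerXn2r // nnegrE; first by rewrite mulr_ge0 // subr_ge0.
exact: divr_ge0.
Qed.

Lemma mu_succ_ratio_ge (R : realType) (p eps : R) n k :
  0 < p < 1 -> 0 <= eps <= 1 -> (0 < k)%N -> (n <= k * k)%N ->
  1 + n%:R / k%:R <= eps * (1 - p) * (n%:R - 1) ->
  (1 - eps) * powR (bb p) (n%:R ^+ 2 / (2 * k%:R * k.+1%:R) - n%:R / (2 * k%:R))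
    <= mu p n k.+1 / mu p n k.
Proof.
move=> /andP[p_gt0 p_lt1] /andP[eps_ge0 eps_le1] k_gt0 le_n_kk small.
have le_div : (n %/ k <= k)%N by rewrite -ltnS ltn_divLR // mulSn; lia.
have k_gt0R : 0 < k%:R :> R by rewrite ltr0n.
have x_ge0 : 0 <= n%:R / k%:R :> R by rewrite divr_ge0.
have q_le_x : (n %/ k)%:R <= n%:R / k%:R :> R.
  by rewrite ler_pdivlMr // -natrM ler_nat leq_divM.
have epsp_ge0 : 0 <= eps * (1 - p) by rewrite mulr_ge0 //; lra.
have epsp_le1 : eps * (1 - p) <= 1 by rewrite mulr_ile1 //; lra.
have n_ge2 : 2 <= n%:R :> R by have := ler0n R n; nra.
have N2 := bin2R R n.
have a_ge1 : 1 <= (1 - p) * 'C(n, 2)%:R by nra.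
have F1_le : (mono_pairs n k)%:R <= eps * ((1 - p) * 'C(n, 2)%:R).
  have := mono_pairs_le n k_gt0; rewrite -(ler_nat R) !natrM => le2.
  nra.
have F21 := mono_pairs_succ_le k_gt0 le_div.
have binom := bin_shift_ge (introT andP (conj (ltW p_gt0) p_lt1)) eps_le1 a_ge1 F21 F1_le.
have b_ge1 : 1 <= bb p by rewrite invf_ge1; lra.
have pow_le : powR (bb p) (n%:R ^+ 2 / (2 * k%:R * k.+1%:R) - n%:R / (2 * k%:R))
    <= bb p ^+ (mono_pairs n k - mono_pairs n k.+1).
  rewrite -powR_mulrn; last by lra.
  by apply: ler_powR => //; apply: exponent_le_mono_pairs_drop.
have c1_gt0 : (0 < multinom n (part_size n k))%N.
  by have := fact_gt0 n; rewrite -(multinom_part_size n k_gt0) muln_gt0 => /andP[].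
have c12 := multinom_part_size_succ k_gt0 le_div.
have le_mF1 : (m_of p n + mono_pairs n k <= 'C(n, 2))%N.
  apply: truncn_add_le (ltW p_gt0) (le_trans F1_le _); rewrite ler_piMl //; lra.
rewrite -/(m_of p n) in binom.
have C1_gt0 : (0 < 'C('C(n, 2) - mono_pairs n k, m_of p n))%N.
  by rewrite bin_gt0 leq_subRL 1?addnC // (leq_trans (leq_addl _ _) le_mF1).
have Cn_gt0 : (0 < 'C('C(n, 2), m_of p n))%N.
  by rewrite bin_gt0 (leq_trans (leq_addr _ _) le_mF1).
rewrite !muE !natrM invf_div mulrA divfK ?gt_eqF ?ltr0n // ler_pdivlMr ?mulr_gt0 ?ltr0n //.
rewrite mulrCA; apply: (@le_trans _ _ ((multinom n (part_size n k))%:R *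
  'C('C(n, 2) - mono_pairs n k.+1, m_of p n)%:R)).
  apply: ler_wpM2l => //; apply: le_trans binom; apply: ler_wpM2r => //.
  by apply: ler_wpM2l => //; lra.
by apply: ler_wpM2r => //; rewrite ler_nat.
Qed.

Lemma root4_expr4 (R : rcfType) (x : R) : 0 <= x -> Num.sqrt (Num.sqrt x) ^+ 4 = x.
Proof.
by move=> x_ge0; rewrite -[4%N]/(2 * 2)%N exprM !sqr_sqrtr ?sqrtr_ge0.
Qed.

Lemma ln_le_root4 (R : realType) (x : R) : 0 < x -> ln x <= 4 * Num.sqrt (Num.sqrt x).
Proof.
move=> x_gt0; rewrite -{1}(root4_expr4 (ltW x_gt0)); set u := Num.sqrt _.
have u_gt0 : 0 < u by rewrite !sqrtr_gt0.
rewrite lnXn // -[ln u *+ 4]mulr_natl ler_pM2l ?ltr0n //.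
have := @le_ln1Dx R (u - 1) ltac:(lra); rewrite addrC subrK; lra.
Qed.

Lemma gamma_n_le (R : realType) (p : R) n : 0 < p < 1 -> bb p < n%:R ->
  gamma_n p n <= 8 / ln (bb p) * Num.sqrt (Num.sqrt n%:R).
Proof.
move=> /andP[p_gt0 p_lt1] b_lt_n.
have b_gt1 : 1 < bb p by rewrite invf_gt1; lra.
have lnb_gt0 : 0 < ln (bb p) by rewrite ln_gt0.
have logn_gt1 : 1 < logb p n%:R.
  by rewrite /logb ltr_pdivlMr // mul1r ltr_ln // posrE; lra.
have loglog_ge0 : 0 <= logb p (logb p n%:R) by rewrite divr_ge0 ?ln_ge0 ?ltW.
have log2_ge0 : 0 <= logb p 2 by rewrite divr_ge0 ?ln_ge0 ?ltW //; lra.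
have : logb p n%:R <= 4 * Num.sqrt (Num.sqrt n%:R) / ln (bb p).
  by rewrite ler_pM2r ?invr_gt0 // ln_le_root4 //; lra.
rewrite /gamma_n; lra.
Qed.

Lemma quartic_dominates (R : realFieldType) (B del u x k : R) :
  1 <= B -> 0 < del -> 2 + B + (B + 1) / del <= u -> 0 <= x <= B * u -> 0 < k ->
  x * k = u ^+ 4 -> u ^+ 4 <= k * k /\ 1 + x <= del * (u ^+ 4 - 1).
Proof.
move=> B_ge1 del_gt0 u_large /andP[x_ge0 x_le] k_gt0 xk.
have Bd_ge0 : 0 <= (B + 1) / del by rewrite divr_ge0 //; lra.
have u_ge2 : 2 <= u by lra.
have Bu : B + 1 <= del * u by rewrite mulrC -ler_pdivrMr //; lra.
have x_le_uu : x <= u * u by apply: le_trans x_le _; rewrite ler_wpM2r //; lra.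
have u4 : u ^+ 4 = u * u * (u * u) by ring.
have uu_gt0 : 0 < u * u by rewrite mulr_gt0 //; lra.
split.
  have uu_le_k : u * u <= k by rewrite -(ler_pM2l uu_gt0) -u4 -xk ler_wpM2r //; lra.
  by rewrite u4 ler_pM // ltW.
have u3 : u * (u * u) <= u ^+ 4 - 1 by rewrite u4; nra.
have : (B + 1) * u <= del * (u * (u * u)) by nra.
nra.
Qed.

Lemma ratio_eventually_small (R : realType) (p : R) (k : nat -> nat) :
  0 < p < 1 -> (forall n, (0 < k n)%N) ->
  (exists C : R, exists N : nat, forall n : nat, (N <= n)%N ->
     `|n%:R / (k n)%:R - gamma_n p n| <= C) ->
  forall del : R, 0 < del -> exists N : nat, forall n : nat, (N <= n)%N ->
    (n <= k n * k n)%N /\ 1 + n%:R / (k n)%:R <= del * (n%:R - 1).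
Proof.
move=> p01 k_gt0 [C [N0 close]] del del_gt0.
have lnb_gt0 : 0 < ln (bb p) by rewrite ln_gt0 // invf_gt1; case/andP: p01 => *; lra.
set A := 8 / ln (bb p); set B := A + `|C| + 1; set U := 2 + B + (B + 1) / del.
have A_ge0 : 0 <= A by rewrite divr_ge0 ?ltW.
have B_ge1 : 1 <= B by rewrite /B; have := normr_ge0 C; lra.
have Bd_ge0 : 0 <= (B + 1) / del by rewrite divr_ge0 //; lra.
have U_ge2 : 2 <= U by rewrite /U; lra.
exists (maxn N0 (maxn (Num.truncn (U ^+ 4)).+1 (Num.truncn (bb p)).+1)) => n.
rewrite !geq_max => /and3P[le_N0 le_U le_b].
have n_gt0 : 0 < n%:R :> R by rewrite ltr0n (leq_trans _ le_b).
have U_le : U ^+ 4 <= n%:R by apply: ltW (lt_le_trans (truncnS_gt _) _); rewrite ler_nat.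
have b_lt : bb p < n%:R by apply: lt_le_trans (truncnS_gt _) _; rewrite ler_nat.
have u4 := root4_expr4 (ltW n_gt0); have gamma_le := gamma_n_le p01 b_lt.
set u : R := Num.sqrt (Num.sqrt n%:R) in u4 gamma_le.
have u_ge0 : 0 <= u by rewrite !sqrtr_ge0.
have U_le_u : U <= u by rewrite -(ler_pXn2r (isT : (0 < 4)%N)) ?nnegrE ?u4 //; lra.
have k_gt0R : 0 < (k n)%:R :> R by rewrite ltr0n.
have x_le : n%:R / (k n)%:R <= B * u.
  have := ler_norm (n%:R / (k n)%:R - gamma_n p n); have := close n le_N0.
  have : `|C| <= `|C| * u by rewrite ler_peMr //; lra.
  have := ler_norm C; rewrite -/A /B in gamma_le *; lra.
have := @quartic_dominates R B del u (n%:R / (k n)%:R) (k n)%:R B_ge1 del_gt0.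
rewrite u4 divfK ?gt_eqF // => /(_ U_le_u _ k_gt0R erefl) [].
  by rewrite divr_ge0.
by rewrite -natrM ler_nat.
Qed.

Theorem lemma2 (R : realType) (p : R) (hp0 : 0 < p) (hp1 : p < 1 - expR (-2))
  (k : nat -> nat) (hk : forall n, (0 < k n)%N)
  (hO : exists C : R, exists N : nat, forall n : nat, (N <= n)%N ->
          `| n%:R / (k n)%:R - gamma_n p n | <= C) :
  forall eps : R, 0 < eps -> exists N : nat, forall n : nat, (N <= n)%N ->
    (1 - eps) * powR (bb p)
        ((n%:R)^+2 / (2 * (k n)%:R * (k n).+1%:R) - n%:R / (2 * (k n)%:R))
      <= mu p n (k n).+1 / mu p n (k n).
Proof.
move=> eps eps_gt0.
have mu_ge0 n k' : 0 <= mu p n k' by rewrite muE divr_ge0.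
have p01 : 0 < p < 1 by rewrite hp0; have := expR_gt0 (-2 : R); lra.
case: (lerP (1 - eps) 0) => [eps_ge1 | eps_lt1].
  exists 0%N => n _; apply: le_trans (divr_ge0 (mu_ge0 _ _) (mu_ge0 _ _)).
  by rewrite mulr_le0_ge0 ?powR_ge0.
have del_gt0 : 0 < eps * (1 - p) by rewrite mulr_gt0 //; lra.
have [N small] := ratio_eventually_small p01 hk hO del_gt0.
exists N => n /small [le_kk small_n].
by apply: mu_succ_ratio_ge => //; rewrite ?(ltW eps_gt0) //; lra.
Qed.
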